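(* With notation as below, the chain map $\Phi:\mathbb{G}\to\mathbb{F}$ is not a morphism of dg algebras, but for all $g_1,g_2\in\mathbb{G}$ one has $z\,\Phi(g_1g_2)=\Phi(g_1)\Phi(g_2)$, where products are taken with respect to Gemeda's dg algebra structures on the Taylor resolutions $\mathbb{G}$ and $\mathbb{F}$.
   Context: Let $n\ge1$, $a_1,\ldots,a_n\ge0$, $Q=\Bbbk[z,x_1,\ldots,x_n,y_{i,j}\ (1\le i\le n,1\le j\le a_i)]$, $I=(zx_1,\ldots,zx_n)$, $J=(x_iy_{i,j})$. Order $G(I)$ by $zx_i<zx_j$ iff $i<j$ and $G(J)$ by $x_iy_{i,\ell}<x_jy_{j,p}$ iff $i<j$, or $i=j$ and $\ell<p$. For an ordered generating set and a subset $U$, $m_U=\mathrm{lcm}(U)$. $\mathbb{F}$ (basis $f_V$, $V\subseteq G(I)$) and $\mathbb{G}$ (basis $g_W$, $W\subseteq G(J)$) are the Taylor resolutions of $Q/I$, $Q/J$, with differential $\partial(e_U)=\sum_{u\in U}(-1)^{|\{v\in U:v<u\}|}\frac{m_U}{m_{U\setminus\{u\}}}e_{U\setminus\{u\}}$ and Gemeda product $e_Ve_W=(-1)^{|\{(v,w)\in V\times W:v>w\}|}\frac{m_Vm_W}{m_{V\cup W}}e_{V\cup W}$ if $V\cap W=\emptyset$, and $0$ otherwise. For $W\subseteq G(J)$, $W_z$ is the multiset $\{zx_i:x_iy_{i,j}\in W\}$ ordered as $W$, and $y_W=\mathrm{lcm}\{y_{i,j}:x_iy_{i,j}\in W\}$.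 $\Phi$ is the $Q$-linear map with $\Phi(1)=z$ and $\Phi(g_W)=y_Wf_{W_z}$ for $W\neq\emptyset$, where $f_{W_z}:=0$ if $W_z$ has a repeated element. *)

From HB Require Import structures.
From mathcomp Require Import all_boot all_order all_algebra.
From mathcomp Require Import mpoly.
Set Implicit Arguments. Unset Strict Implicit. Unset Printing Implicit Defensive.
Import GRing.Theory.
Local Open Scope ring_scope.

Section Taylor.
(* Generic Taylor resolution over Q = k[X_0..X_{N-1}] for an ordered, finite
   family of monomial generators indexed by a finType T.  An element of the resolution is a Q-linear
   combination of the basis elements e_U, U a subset of the generators, i.e. a
   finite function {set T} -> Q. *)
Variables (k : fieldType) (N : nat) (T : finType) (lt : rel T)
          (mon : T -> 'X_{1..N}).

Definition Poly := {mpoly k[N]}.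
Definition Elt := {ffun {set T} -> Poly}.

(* exponent vector of m_U = lcm(U); m_emptyset = 1 *)
Definition lcm_exp (U : {set T}) : 'X_{1..N} :=
  [multinom (\max_(u in U) mon u i)%N | i < N].

Definition gem_coef (V W : {set T}) : Poly :=
  'X_[mnm_sub (mnm_add (lcm_exp V) (lcm_exp W)) (lcm_exp (V :|: W))].

Definition gem_sign (V W : {set T}) : Poly :=
  (-1) ^+ #|[set p in setX V W | lt p.2 p.1]|.

Definition gem_mul (c d : Elt) : Elt :=
  [ffun U => \sum_(V : {set T}) \sum_(W : {set T} |
        [disjoint V & W] && (V :|: W == U))
        gem_sign V W * gem_coef V W * (c V * d W)].

Definition gem_one : Elt := [ffun U => (U == set0)%:R].

Definition scale_elt (q : Poly) (c : Elt) : Elt := [ffun U => q * c U].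

End Taylor.

Section Setting.
Variables (k : fieldType) (n : nat) (a : 'I_n -> nat).

(* Generators of J: x_i y_{i,j}, indexed by pairs (i, j) with j < a_i. *)
Definition GJ := {i : 'I_n & 'I_(a i)}.

(* Variables of Q: z, x_1..x_n, y_{i,j}. *)
Definition Var := (unit + ('I_n + GJ))%type.
Definition NV := #|{: Var}|.
Definition var (v : Var) : 'I_NV := enum_rank v.

Definition vz : 'I_NV := var (inl tt).
Definition vx (i : 'I_n) : 'I_NV := var (inr (inl i)).
Definition vy (w : GJ) : 'I_NV := var (inr (inr w)).

Definition monI (i : 'I_n) : 'X_{1..NV} := mnm_add (mnm1 vz) (mnm1 (vx i)).
Definition ltI : rel 'I_n := fun i j => (i < j)%N.

Definition monJ (w : GJ) : 'X_{1..NV} := mnm_add (mnm1 (vx (tag w))) (mnm1 (vy w)).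
Definition ltJ : rel GJ := fun w1 w2 =>
  ((tag w1 < tag w2)%N || ((tag w1 == tag w2) && (nat_of_ord (tagged w1) < nat_of_ord (tagged w2))%N)).

Definition EltF := Elt k NV 'I_n.
Definition EltG := Elt k NV GJ.

Definition mulF : EltF -> EltF -> EltF := @gem_mul k NV _ ltI monI.
Definition mulG : EltG -> EltG -> EltG := @gem_mul k NV _ ltJ monJ.
Definition oneF : EltF := gem_one k NV 'I_n.
Definition oneG : EltG := gem_one k NV GJ.

Definition zQ : Poly k NV := 'X_vz.

(* W_z has no repeated element iff the first components of W are distinct *)
Definition Wz_simple (W : {set GJ}) : bool :=
  [forall w1 in W, forall w2 in W, (tag w1 == tag w2) ==> (w1 == w2)].

Definition Wz (W : {set GJ}) : {set 'I_n} := [set tag w | w in W].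

(* y_W = lcm{y_{i,j}} = product of the distinct variables y_{i,j}, (i,j) in W *)
Definition yW (W : {set GJ}) : Poly k NV := \prod_(w in W) 'X_(vy w).

(* Phi(g_emptyset) = z f_emptyset; Phi(g_W) = y_W f_{W_z} (0 if W_z has repeats) *)
Definition Phi_basis (W : {set GJ}) : Poly k NV :=
  if W == set0 then zQ else yW W.

Definition Phi (c : EltG) : EltF :=
  [ffun V => \sum_(W : {set GJ} | Wz_simple W && (Wz W == V)) Phi_basis W * c W].

End Setting.

From mathcomp Require Import all_boot all_order all_algebra.
From mathcomp Require Import mpoly ring zify.
Set Implicit Arguments. Unset Strict Implicit. Unset Printing Implicit Defensive.
Import GRing.Theory.
Local Open Scope ring_scope.

(* Expand both sides of z Φ(g1 g2) = Φ(g1) Φ(g2) as sums over pairs (A, B) of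
   subsets of G(J).  On both sides a pair contributes exactly when A and B are
   disjoint and the generators x_i y_{i,j} of A ∪ B have pairwise distinct
   indices i.  For such a pair the generators of A ∪ B share no variable, so
   the Gemeda coefficient in G is 1; the signs agree because x_i y_{i,j} ↦ z x_i
   preserves the order of generators with distinct indices; and in F the
   coefficient m_V m_W / m_{V ∪ W} of two nonempty sets is z, the common
   variable of all z x_i, which is balanced by the extra factor z on the left
   (when A or B is empty that z comes from Φ(1) = z instead).  Φ(1) = z ≠ 1 is
   also why Φ is not a morphism of dg algebras. *)

Lemma big_fibers (R : Type) (idx : R) (op : Monoid.com_law idx)
    (I J : finType) (P : pred I) (Q : pred J) (h : I -> J) (F : J -> I -> R) :
  \big[op/idx]_(j | Q j) \big[op/idx]_(i | P i && (h i == j)) F j i =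
  \big[op/idx]_(i | P i && Q (h i)) F (h i) i.
Proof.
rewrite (partition_big h Q) => [|i /andP[]//]; apply: eq_bigr => j Qj.
apply: eq_big => [i | i /andP[_ /eqP->]//].
by case: eqP => [->|]; rewrite ?Qj ?andbT ?andbF.
Qed.

Lemma addn_bigmax_setU (T : finType) (f : T -> nat) (A B : {set T}) :
  [disjoint A & B] -> {in A :|: B &, forall u u', f u != 0 -> f u' != 0 -> u = u'}%N ->
  (\max_(u in A) f u + \max_(u in B) f u = \max_(u in A :|: B) f u)%N.
Proof.
move=> dAB f_uniq; rewrite big_setU //=; last exact: maxnn.
have [/forall_inP A0|/forall_inPn[x xA fx]] := boolP [forall u in A, f u == 0%N].
  by rewrite big1 ?add0n ?max0n // => u /A0/eqP.
rewrite [\max_(u in B) _]big1 ?addn0 ?maxn0 // => y yB; apply/eqP/negP => /negP fy.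
have xy : x = y by apply: f_uniq; rewrite // inE ?xA ?yB ?orbT.
by move/disjointFr: dAB => /(_ x xA); rewrite xy yB.
Qed.

Lemma bigmax_eq_const (T : finType) (f : T -> nat) (V : {set T}) c :
  V != set0 -> {in V, forall u, f u = c} -> (\max_(u in V) f u = c)%N.
Proof.
move=> /set0Pn[x xV] fc; apply/eqP; rewrite eqn_leq.
apply/andP; split; first by apply/bigmax_leqP => u /fc->.
by rewrite -(fc x xV) leq_bigmax_cond.
Qed.

Section Gemeda.
Variables (k : fieldType) (N : nat) (T : finType) (mon : T -> 'X_{1..N}).

Lemma lcm_expE (U : {set T}) i : lcm_exp mon U i = (\max_(u in U) mon u i)%N.
Proof. exact: mnmE. Qed.

Lemma lcm_exp0 : lcm_exp mon set0 = 0%MM.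
Proof. by apply/mnmP => i; rewrite lcm_expE big_set0 mnm0E. Qed.

Lemma gem_coef0l (W : {set T}) : gem_coef k mon set0 W = 1.
Proof. by rewrite /gem_coef lcm_exp0 set0U addmK mpolyX0. Qed.

Lemma gem_coef0r (V : {set T}) : gem_coef k mon V set0 = 1.
Proof. by rewrite /gem_coef lcm_exp0 setU0 addmC addmK mpolyX0. Qed.

Lemma gem_coef_coprime (V W : {set T}) : [disjoint V & W] ->
  (forall i, {in V :|: W &, forall u u', mon u i != 0 -> mon u' i != 0 -> u = u'})%N ->
  gem_coef k mon V W = 1.
Proof.
move=> dVW coprime; rewrite /gem_coef -mpolyX0; congr 'X_[_].
apply/mnmP => i; rewrite mnmBE mnmDE !lcm_expE mnm0E.
by rewrite addn_bigmax_setU ?subnn // => u u'; apply: coprime.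
Qed.

Lemma gem_mulE (lt : rel T) (c d : Elt k N T) U :
  gem_mul lt mon c d U =
  \sum_(p : {set T} * {set T} | [disjoint p.1 & p.2] && (p.1 :|: p.2 == U))
     gem_sign k N lt p.1 p.2 * gem_coef k mon p.1 p.2 * (c p.1 * d p.2).
Proof. by rewrite ffunE pair_big_dep. Qed.

End Gemeda.

Section Setting.
Variables (k : fieldType) (n : nat) (a : 'I_n -> nat).
Implicit Types (A B W : {set GJ a}) (V : {set 'I_n}).

Lemma var_inj : injective (@var n a).
Proof. exact: enum_rank_inj. Qed.

Lemma Wz_simpleP W : reflect {in W &, injective tag} (Wz_simple W).
Proof.
apply: (iffP forall_inP) => [simple u u' uW u'W e | inj_tag u uW].
  by move/forall_inP/(_ u' u'W)/implyP: (simple u uW); rewrite e eqxx => /(_ isT)/eqP.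
by apply/forall_inP => u' u'W; apply/implyP => /eqP/inj_tag-> //.
Qed.

Lemma Wz_simpleE W : Wz_simple W = (#|Wz W| == #|W|).
Proof. exact/Wz_simpleP/imset_injP. Qed.

Lemma disjoint_simpleU A B :
  [disjoint A & B] && Wz_simple (A :|: B) =
  [&& Wz_simple A, Wz_simple B & [disjoint Wz A & Wz B]].
Proof.
have WzU : Wz (A :|: B) = Wz A :|: Wz B by apply: imsetU.
rewrite !Wz_simpleE -!setI_eq0 -!cards_eq0 WzU !cardsU.
have leA : (#|Wz A| <= #|A|)%N by apply: leq_imset_card.
have leB : (#|Wz B| <= #|B|)%N by apply: leq_imset_card.
have leIA : (#|Wz A :&: Wz B| <= #|Wz A|)%N by apply/subset_leq_card/subsetIl.
have meetW : (0 < #|A :&: B| -> 0 < #|Wz A :&: Wz B|)%N.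
  case/card_gt0P => x; rewrite inE => /andP[xA xB].
  by apply/card_gt0P; exists (tag x); rewrite inE !imset_f.
lia.
Qed.

Lemma disjoint_of_Wz A B : [disjoint Wz A & Wz B] -> [disjoint A & B].
Proof.
move=> dW; rewrite disjoint_subset; apply/subsetP => x xA; rewrite inE.
by apply: contraFN (disjointFr dW (imset_f tag xA)); apply: imset_f.
Qed.

Lemma monJ_support (u : GJ a) v : monJ u v != 0%N -> v = vx a (tag u) \/ v = vy u.
Proof.
rewrite mnmDE !mnm1E; have [<-|_] := eqVneq (vx a (tag u)) v; first by left.
by have [<-|_] := eqVneq (vy u) v; [right|].
Qed.

Lemma monI_support (i : 'I_n) v : monI a i v != 0%N -> v = vz a \/ v = vx a i.
Proof.
rewrite mnmDE !mnm1E; have [<-|_] := eqVneq (vz a) v; first by left.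
by have [<-|_] := eqVneq (vx a i) v; [right|].
Qed.

Lemma gem_coef_monJ A B : [disjoint A & B] -> Wz_simple (A :|: B) ->
  gem_coef k (@monJ n a) A B = 1.
Proof.
move=> dAB /Wz_simpleP inj_tag; apply: gem_coef_coprime => // v u u' uAB u'AB.
case/monJ_support=> -> /monJ_support[] /var_inj // [].
- exact: inj_tag.
- by move=> ->.
Qed.

Lemma gem_coef_monI V1 V2 : [disjoint V1 & V2] -> V1 != set0 -> V2 != set0 ->
  gem_coef k (monI a) V1 V2 = zQ k a.
Proof.
move=> dV nV1 nV2; rewrite /gem_coef; congr 'X_[_].
have vz_exp i : monI a i (vz a) = 1%N.
  by rewrite mnmDE !mnm1E eqxx; case: eqP => // /var_inj.
apply/mnmP => v; rewrite mnmBE mnmDE !lcm_expE mnm1E.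
have [<-|nzv] := eqVneq (vz a) v.
  have nV12 : V1 :|: V2 != set0 by rewrite setU_eq0 negb_and nV1.
  by rewrite !(@bigmax_eq_const _ _ _ 1) // => i _; apply: vz_exp.
rewrite addn_bigmax_setU ?subnn // => i j _ _.
case/monI_support=> [/esym/eqP|->]; first by rewrite (negPf nzv).
by case/monI_support=> /var_inj // [->].
Qed.

Lemma gem_sign_Wz A B : Wz_simple A -> Wz_simple B -> [disjoint Wz A & Wz B] ->
  gem_sign k (NV a) (@ltJ n a) A B = gem_sign k (NV a) (@ltI n) (Wz A) (Wz B).
Proof.
move=> /Wz_simpleP injA /Wz_simpleP injB dW; rewrite /gem_sign; congr (_ ^+ _).
pose tag2 (p : GJ a * GJ a) := (tag p.1, tag p.2).
have ltJ_tag x y : x \in A -> y \in B -> ltJ y x = ltI (tag y) (tag x).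
  move=> xA yB; have /negPf tag_neq : tag y != tag x.
    by apply/eqP => e; have := disjointFr dW (imset_f tag xA); rewrite -e imset_f.
  by rewrite /ltJ tag_neq andFb orbF.
have -> : [set q in setX (Wz A) (Wz B) | ltI q.2 q.1] =
          tag2 @: [set p in setX A B | ltJ p.2 p.1].
  apply/setP => -[i j]; rewrite !inE /=; apply/andP/imsetP.
    case=> /andP[/imsetP[x xA ->] /imsetP[y yB ->]] lt_ji.
    by exists (x, y); rewrite // !inE /= xA yB ltJ_tag.
  case=> -[x y]; rewrite !inE /= => /andP[/andP[xA yB] lt_yx] [-> ->].
  by rewrite !imset_f // -ltJ_tag.
rewrite card_in_imset // => -[x y] [x' y']; rewrite !inE /=.
case/andP=> /andP[xA yB] _ /andP[/andP[x'A y'B] _] [tx ty].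
by rewrite (injA _ _ xA x'A tx) (injB _ _ yB y'B ty).
Qed.

Lemma yW_setU A B : [disjoint A & B] -> yW k (A :|: B) = yW k A * yW k B.
Proof. by move=> dAB; rewrite /yW -bigU //; apply: eq_bigl => w; rewrite inE. Qed.

Lemma zQ_Phi_basisU A B : [disjoint Wz A & Wz B] ->
  zQ k a * Phi_basis k (A :|: B) =
  gem_coef k (monI a) (Wz A) (Wz B) * (Phi_basis k A * Phi_basis k B).
Proof.
move=> dW; rewrite /Phi_basis setU_eq0.
have [-> | nA] := eqVneq A set0.
  by rewrite set0U /Wz imset0 gem_coef0l mul1r.
have [-> | nB] := eqVneq B set0.
  by rewrite setU0 /Wz imset0 gem_coef0r mul1r mulrC.
by rewrite yW_setU ?disjoint_of_Wz // gem_coef_monI // imset_eq0.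
Qed.

Lemma scale_Phi_mulGE (g1 g2 : EltG k a) V :
  scale_elt (zQ k a) (Phi (mulG g1 g2)) V =
  \sum_(p : {set GJ a} * {set GJ a} | [disjoint p.1 & p.2] &&
         (Wz_simple (p.1 :|: p.2) && (Wz (p.1 :|: p.2) == V)))
    zQ k a * (Phi_basis k (p.1 :|: p.2) *
      (gem_sign k (NV a) (@ltJ n a) p.1 p.2 * gem_coef k (@monJ n a) p.1 p.2 *
        (g1 p.1 * g2 p.2))).
Proof.
rewrite !ffunE mulr_sumr.
under eq_bigr => W _ do rewrite /mulG gem_mulE !mulr_sumr.
exact: big_fibers.
Qed.

Lemma mulF_PhiE (g1 g2 : EltG k a) V :
  mulF (Phi g1) (Phi g2) V =
  \sum_(p : {set GJ a} * {set GJ a} | (Wz_simple p.1 && Wz_simple p.2) &&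
         ([disjoint Wz p.1 & Wz p.2] && (Wz p.1 :|: Wz p.2 == V)))
    gem_sign k (NV a) (@ltI n) (Wz p.1) (Wz p.2) * gem_coef k (monI a) (Wz p.1) (Wz p.2) *
      (Phi_basis k p.1 * g1 p.1 * (Phi_basis k p.2 * g2 p.2)).
Proof.
rewrite /mulF gem_mulE.
pose Wz2 (p : {set GJ a} * {set GJ a}) := (Wz p.1, Wz p.2).
under eq_bigr => q _ do rewrite !ffunE big_distrlr pair_big_dep mulr_sumr
  (eq_bigl (fun p => (Wz_simple p.1 && Wz_simple p.2) && (Wz2 p == q)) _ (fun p => andbACA _ _ _ _)).
by rewrite big_fibers.
Qed.

Lemma Phi_oneG : Phi (oneG k a) set0 = zQ k a.
Proof.
rewrite ffunE (big_pred1 set0) => [|W]; first by rewrite ffunE eqxx /Phi_basis eqxx mulr1.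
rewrite /= imset_eq0; case: eqP => [->|_]; last by rewrite andbF.
by rewrite Wz_simpleE /Wz imset0 !cards0.
Qed.

Lemma zQ_neq1 : zQ k a != 1.
Proof.
apply/eqP => /(congr1 (mcoeff 0%MM)); rewrite mcoeffX mcoeff1 eqxx mnm1_eq0.
by move/eqP; rewrite eq_sym oner_eq0.
Qed.
End Setting.

Theorem mainTheorem10 (k : fieldType) (n : nat) (a : 'I_n -> nat) :
  (1 <= n)%N ->
  (forall g1 g2 : EltG k a,
      scale_elt (zQ k a) (Phi (mulG g1 g2)) = mulF (Phi g1) (Phi g2)) /\
  ~ (Phi (oneG k a) = oneF k a /\
     forall g1 g2 : EltG k a, Phi (mulG g1 g2) = mulF (Phi g1) (Phi g2)).
Proof.
move=> _; split=> [g1 g2 | [Phi1 _]]; last first.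
  by move/eqP: (zQ_neq1 k a); rewrite -Phi_oneG Phi1 ffunE eqxx.
apply/ffunP => V; rewrite scale_Phi_mulGE mulF_PhiE.
apply: eq_big => [[A B] | [A B] /andP[dAB /andP[sAB _]]] /=.
  by rewrite andbA disjoint_simpleU /Wz imsetU -!andbA.
have /and3P[sA sB dW] : [&& Wz_simple A, Wz_simple B & [disjoint Wz A & Wz B]].
  by rewrite -disjoint_simpleU dAB.
rewrite gem_coef_monJ // gem_sign_Wz // mulr1 mulrA zQ_Phi_basisU //.
ring.
Qed.
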